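(* Let $k$ be a real division algebra, $\mathcal Z\subset k$ a discrete subring closed under conjugation, $(a_n)_{n\ge1}$ a sequence in $\mathcal Z$ and $x_0\in k$ with $x_n=T_{a_n}\cdots T_{a_1}x_0$ defined and $\|x_n\|<1$ for all $n\ge0$. Then for every $n$ the product \[\prod_{i=0}^{n-1}\|T^{-1}_{a_{i+1}}\cdots T^{-1}_{a_n}0\|\] is well-defined, and these products are bounded above uniformly in $n$.
   Context: $k\in\{\mathbb{R},\mathbb{C},\mathbb{H},\mathbb{O}\}$, identified with $\mathbb{R}^d$ with Euclidean norm $\|x\|^2=x\overline x$. For $a\in\mathcal Z$, $T_ax=x^{-1}-a$ and $T_a^{-1}x=(x+a)^{-1}$. Discrete means discrete in $\mathbb{R}^d$. *)

From Stdlib Require Import Reals Lra.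
Open Scope R_scope.

(* The real division algebras R, C, H, O realised by the Cayley-Dickson
   construction: CD 0 = R, CD 1 = C, CD 2 = H, CD 3 = O, with CD n
   identified with R^(2^n) (coordinates = the nested pairs). *)
Fixpoint CD (n : nat) : Type :=
  match n with O => R | S m => (CD m * CD m)%type end.

Fixpoint cd0 (n : nat) : CD n :=
  match n return CD n with O => 0 | S m => (cd0 m, cd0 m) end.

Fixpoint cd1 (n : nat) : CD n :=
  match n return CD n with O => 1 | S m => (cd1 m, cd0 m) end.

Fixpoint cdadd (n : nat) : CD n -> CD n -> CD n :=
  match n return CD n -> CD n -> CD n with
  | O => fun x y => x + y
  | S m => fun x y => (cdadd m (fst x) (fst y), cdadd m (snd x) (snd y))
  end.

Fixpoint cdopp (n : nat) : CD n -> CD n :=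
  match n return CD n -> CD n with
  | O => fun x => - x
  | S m => fun x => (cdopp m (fst x), cdopp m (snd x))
  end.

Definition cdsub (n : nat) (x y : CD n) : CD n := cdadd n x (cdopp n y).

Fixpoint cdscale (n : nat) (r : R) : CD n -> CD n :=
  match n return CD n -> CD n with
  | O => fun x => r * x
  | S m => fun x => (cdscale m r (fst x), cdscale m r (snd x))
  end.

Fixpoint cdconj (n : nat) : CD n -> CD n :=
  match n return CD n -> CD n with
  | O => fun x => x
  | S m => fun x => (cdconj m (fst x), cdopp m (snd x))
  end.

Fixpoint cdmul (n : nat) : CD n -> CD n -> CD n :=
  match n return CD n -> CD n -> CD n with
  | O => fun x y => x * y
  | S m => fun x y =>
      (cdsub m (cdmul m (fst x) (fst y)) (cdmul m (cdconj m (snd y)) (snd x)),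
       cdadd m (cdmul m (snd y) (fst x)) (cdmul m (snd x) (cdconj m (fst y))))
  end.

(* squared Euclidean norm (sum of squares of the 2^n coordinates) = x conj(x) *)
Fixpoint cdsqnorm (n : nat) : CD n -> R :=
  match n return CD n -> R with
  | O => fun x => x * x
  | S m => fun x => cdsqnorm m (fst x) + cdsqnorm m (snd x)
  end.

Definition cdnorm (n : nat) (x : CD n) : R := sqrt (cdsqnorm n x).

Definition cdinv (n : nat) (x : CD n) : CD n :=
  cdscale n (/ cdsqnorm n x) (cdconj n x).

Definition Tmap (n : nat) (a x : CD n) : option (CD n) :=
  if Req_EM_T (cdnorm n x) 0 then None else Some (cdsub n (cdinv n x) a).

Definition Tinvmap (n : nat) (a x : CD n) : option (CD n) :=
  if Req_EM_T (cdnorm n (cdadd n x a)) 0 then None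
  else Some (cdinv n (cdadd n x a)).

(* orbit a x0 m = x_m = T_{a_m} ... T_{a_1} x0 (None if undefined);
   the sequence (a_n)_{n>=1} is a : nat -> CD n, a 0 unused. *)
Fixpoint orbit (n : nat) (a : nat -> CD n) (x0 : CD n) (m : nat) : option (CD n) :=
  match m with
  | O => Some x0
  | S m' => match orbit n a x0 m' with
            | Some x => Tmap n (a (S m')) x
            | None => None
            end
  end.

(* chain a i k = T^{-1}_{a_{i+1}} ... T^{-1}_{a_{i+k}} 0  (None if undefined) *)
Fixpoint chain (n : nat) (a : nat -> CD n) (i k : nat) : option (CD n) :=
  match k with
  | O => Some (cd0 n)
  | S k' => match chain n a (S i) k' with
            | Some y => Tinvmap n (a (S i)) y
            | None => None
            end
  end.

Definition optnorm (n : nat) (y : option (CD n)) : R :=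
  match y with Some x => cdnorm n x | None => 0 end.

Fixpoint prod_upto (f : nat -> R) (m : nat) : R :=
  match m with O => 1 | S m' => prod_upto f m' * f m' end.

Definition is_subring (n : nat) (Z : CD n -> Prop) : Prop :=
  Z (cd0 n) /\ Z (cd1 n) /\
  (forall x y, Z x -> Z y -> Z (cdadd n x y)) /\
  (forall x, Z x -> Z (cdopp n x)) /\
  (forall x y, Z x -> Z y -> Z (cdmul n x y)).

Definition conj_closed (n : nat) (Z : CD n -> Prop) : Prop :=
  forall x, Z x -> Z (cdconj n x).

Definition discrete (n : nat) (Z : CD n -> Prop) : Prop :=
  forall z, Z z -> exists eps, 0 < eps /\
    forall w, Z w -> cdnorm n (cdsub n w z) < eps -> w = z.

From Stdlib Require Import Reals Lra Lia.
Open Scope R_scope.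

(* Read backwards from a fixed m, y_j := T^{-1}_{a_{j+1}} ... T^{-1}_{a_m} 0 is a fraction
   with a denominator u_j in Z: u_m = 1 and u_j = (y_{j+1} + a_{j+1}) u_{j+1}, so that
   y_j u_j = u_{j+1} and |u_j| * |y_j| * ... * |y_{m-1}| = 1 (here we use that up to the
   octonions the algebra is alternative and its norm multiplicative).  Discreteness forces
   |u| >= 1 for every nonzero u in Z, hence the products are at most 1.  That y_j is defined
   at all comes from the estimate |x_j - y_j| |u_j| <= |x_m| < 1, propagated downwards with
   |s^{-1} - t^{-1}| = |s - t| |s^{-1}| |t^{-1}|: if y_{j+1} + a_{j+1} were 0, then
   |x_{j+1} - y_{j+1}| = |x_j|^{-1} > 1. *)

Ltac cd_induction n :=
  let IH := fresh "IH" in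
  induction n as [|n IH]; intros;
  [ simpl in *
  | repeat match goal with p : CD (S _) |- _ => destruct p end; simpl in * ].

Lemma cdsqnorm_nonneg n (x : CD n) : 0 <= cdsqnorm n x.
Proof.
  revert x; cd_induction n.
  - nra.
  - pose proof (IH c); pose proof (IH c0); lra.
Qed.

Lemma cdsqnorm_eq_0 n (x : CD n) : cdsqnorm n x = 0 -> x = cd0 n.
Proof.
  revert x; cd_induction n.
  - nra.
  - pose proof (cdsqnorm_nonneg n c); pose proof (cdsqnorm_nonneg n c0).
    rewrite (IH c), (IH c0); [reflexivity | lra | lra].
Qed.

Lemma cdsqnorm_cd0 n : cdsqnorm n (cd0 n) = 0.
Proof. cd_induction n; [ring | rewrite IH; ring]. Qed.

Lemma cdsqnorm_cd1 n : cdsqnorm n (cd1 n) = 1.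
Proof. cd_induction n; [ring | rewrite IH, cdsqnorm_cd0; ring]. Qed.

Lemma cdsqnorm_opp n (x : CD n) : cdsqnorm n (cdopp n x) = cdsqnorm n x.
Proof. revert x; cd_induction n; [ring | rewrite !IH; ring]. Qed.

Lemma cdsqnorm_conj n (x : CD n) : cdsqnorm n (cdconj n x) = cdsqnorm n x.
Proof. revert x; cd_induction n; [ring | rewrite IH, cdsqnorm_opp; ring]. Qed.

Lemma cdsqnorm_scale n r (x : CD n) : cdsqnorm n (cdscale n r x) = r * r * cdsqnorm n x.
Proof. revert x; cd_induction n; [ring | rewrite !IH; ring]. Qed.

Lemma cdsub_0_r n (x : CD n) : cdsub n x (cd0 n) = x.
Proof. unfold cdsub; revert x; cd_induction n; [ring | rewrite !IH; reflexivity]. Qed.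

Lemma cdsub_add n (x a : CD n) : cdadd n (cdsub n x a) a = x.
Proof. unfold cdsub; revert x a; cd_induction n; [ring | rewrite !IH; reflexivity]. Qed.

Lemma cdsub_add_add_r n (x y a : CD n) :
  cdsub n (cdadd n x a) (cdadd n y a) = cdsub n x y.
Proof. unfold cdsub; revert x y a; cd_induction n; [ring | rewrite !IH; reflexivity]. Qed.

Lemma cdopp_involutive n (x : CD n) : cdopp n (cdopp n x) = x.
Proof. revert x; cd_induction n; [ring | rewrite !IH; reflexivity]. Qed.

Lemma cdconj_involutive n (x : CD n) : cdconj n (cdconj n x) = x.
Proof. revert x; cd_induction n; [reflexivity | rewrite IH, cdopp_involutive; reflexivity]. Qed.

Lemma cdopp_scale n r (x : CD n) : cdopp n (cdscale n r x) = cdscale n r (cdopp n x).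
Proof. revert x; cd_induction n; [ring | rewrite !IH; reflexivity]. Qed.

Lemma cdconj_scale n r (x : CD n) : cdconj n (cdscale n r x) = cdscale n r (cdconj n x).
Proof. revert x; cd_induction n; [ring | rewrite IH, cdopp_scale; reflexivity]. Qed.

Lemma cdscale_scale n r q (x : CD n) : cdscale n r (cdscale n q x) = cdscale n (r * q) x.
Proof. revert x; cd_induction n; [ring | rewrite !IH; reflexivity]. Qed.

Lemma cdscale_1 n (x : CD n) : cdscale n 1 x = x.
Proof. revert x; cd_induction n; [ring | rewrite !IH; reflexivity]. Qed.

Fixpoint cddot (n : nat) : CD n -> CD n -> R :=
  match n return CD n -> CD n -> R with
  | O => fun x y => x * y
  | S m => fun x y => cddot m (fst x) (fst y) + cddot m (snd x) (snd y)
  end.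

Lemma cddot_scale n r q (x y : CD n) :
  cddot n (cdscale n r x) (cdscale n q y) = r * q * cddot n x y.
Proof. revert x y; cd_induction n; [ring | rewrite !IH; ring]. Qed.

Lemma cddot_opp n (x y : CD n) : cddot n (cdopp n x) (cdopp n y) = cddot n x y.
Proof. revert x y; cd_induction n; [ring | rewrite !IH; ring]. Qed.

Lemma cddot_conj n (x y : CD n) : cddot n (cdconj n x) (cdconj n y) = cddot n x y.
Proof. revert x y; cd_induction n; [ring | rewrite IH, cddot_opp; ring]. Qed.

Lemma cdsqnorm_sub n (x y : CD n) :
  cdsqnorm n (cdsub n x y) = cdsqnorm n x + cdsqnorm n y - 2 * cddot n x y.
Proof. unfold cdsub; revert x y; cd_induction n; [ring | rewrite !IH; ring]. Qed.

Lemma cdnorm_eq_0 n (x : CD n) : cdnorm n x = 0 <-> cdsqnorm n x = 0.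
Proof.
  unfold cdnorm; split; intro H.
  - apply sqrt_eq_0; [apply cdsqnorm_nonneg | exact H].
  - rewrite H; apply sqrt_0.
Qed.

Lemma cdsqnorm_lt_1 n (x : CD n) : cdnorm n x < 1 -> cdsqnorm n x < 1.
Proof.
  unfold cdnorm; intro H.
  destruct (Rlt_or_le (cdsqnorm n x) 1) as [Hlt | Hge]; [exact Hlt |].
  apply sqrt_le_1_alt in Hge; rewrite sqrt_1 in Hge; lra.
Qed.

Lemma cdnorm_ge_1 n (x : CD n) : 1 <= cdsqnorm n x -> 1 <= cdnorm n x.
Proof. intro H; rewrite <- sqrt_1; apply sqrt_le_1_alt, H. Qed.

Lemma cdsqnorm_inv n (x : CD n) : cdsqnorm n x <> 0 -> cdsqnorm n (cdinv n x) = / cdsqnorm n x.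
Proof. intro H; unfold cdinv; rewrite cdsqnorm_scale, cdsqnorm_conj; field; exact H. Qed.

Lemma cdnorm_inv n (x : CD n) : cdsqnorm n x <> 0 -> cdnorm n (cdinv n x) = / cdnorm n x.
Proof.
  intro H; unfold cdnorm; rewrite cdsqnorm_inv by exact H.
  apply sqrt_inv.
Qed.

Lemma cdinv_involutive n (x : CD n) : cdsqnorm n x <> 0 -> cdinv n (cdinv n x) = x.
Proof.
  intro H; unfold cdinv at 1; rewrite cdsqnorm_inv by exact H.
  unfold cdinv; rewrite cdconj_scale, cdconj_involutive, cdscale_scale.
  replace (/ / cdsqnorm n x * / cdsqnorm n x) with 1 by (field; exact H).
  apply cdscale_1.
Qed.

Lemma cdsqnorm_sub_inv n (t s : CD n) : cdsqnorm n t <> 0 -> cdsqnorm n s <> 0 ->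
  cdsqnorm n (cdsub n (cdinv n t) (cdinv n s))
  = cdsqnorm n (cdsub n t s) / (cdsqnorm n t * cdsqnorm n s).
Proof.
  intros Ht Hs; unfold cdinv.
  rewrite !cdsqnorm_sub, !cdsqnorm_scale, cddot_scale, !cdsqnorm_conj, cddot_conj.
  field; split; assumption.
Qed.

Ltac cd_ring n :=
  destruct n as [|[|[|[|k]]]]; [ | | | | lia ];
  repeat match goal with p : CD (S _) |- _ => destruct p end;
  simpl; unfold cdsub; simpl;
  repeat match goal with |- (_, _) = (_, _) => f_equal end;
  try match goal with |- @eq (CD 0) ?u ?v => change (@eq R u v) end;
  ring.

(* [cdmul_conj_mul_l] and [cdsqnorm_mul] fail from the sedenions ([n = 4]) on. *)
Section LowDimension.

Variable n : nat.
Hypothesis Hn : (n <= 3)%nat.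

Lemma cdmul_add_distr_r (x y z : CD n) :
  cdmul n (cdadd n x y) z = cdadd n (cdmul n x z) (cdmul n y z).
Proof. cd_ring n. Qed.

Lemma cdmul_scale_l r (x z : CD n) :
  cdmul n (cdscale n r x) z = cdscale n r (cdmul n x z).
Proof. cd_ring n. Qed.

Lemma cdmul_conj_mul_l (x z : CD n) :
  cdmul n (cdconj n x) (cdmul n x z) = cdscale n (cdsqnorm n x) z.
Proof. cd_ring n. Qed.

Lemma cdsqnorm_mul (x y : CD n) :
  cdsqnorm n (cdmul n x y) = cdsqnorm n x * cdsqnorm n y.
Proof. cd_ring n. Qed.

Lemma cdmul_inv_mul_l (x z : CD n) :
  cdsqnorm n x <> 0 -> cdmul n (cdinv n x) (cdmul n x z) = z.
Proof.
  intro H; unfold cdinv.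
  rewrite cdmul_scale_l, cdmul_conj_mul_l, cdscale_scale by exact Hn.
  replace (/ cdsqnorm n x * cdsqnorm n x) with 1 by (field; exact H).
  apply cdscale_1.
Qed.

Lemma cdnorm_mul (x y : CD n) : cdnorm n (cdmul n x y) = cdnorm n x * cdnorm n y.
Proof.
  unfold cdnorm; rewrite cdsqnorm_mul by exact Hn.
  apply sqrt_mult; apply cdsqnorm_nonneg.
Qed.

End LowDimension.

Fixpoint cdpow (n : nat) (z : CD n) (k : nat) : CD n :=
  match k with O => cd1 n | S k' => cdmul n z (cdpow n z k') end.

Section DiscreteSubring.

Variable n : nat.
Hypothesis Hn : (n <= 3)%nat.
Variable Z : CD n -> Prop.
Hypothesis HZ : is_subring n Z.

Lemma subring_cdpow z k : Z z -> Z (cdpow n z k).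
Proof.
  destruct HZ as (Z0 & Z1 & _ & _ & Zmul).
  intro Hz; induction k as [|k IH]; simpl; auto.
Qed.

Lemma cdsqnorm_cdpow z k : cdsqnorm n (cdpow n z k) = cdsqnorm n z ^ k.
Proof.
  induction k as [|k IH]; simpl.
  - apply cdsqnorm_cd1.
  - rewrite cdsqnorm_mul, IH by exact Hn; reflexivity.
Qed.

Hypothesis Hdisc : discrete n Z.

(* If [0 < |z| < 1], the powers of [z] would accumulate at the isolated point [0]. *)
Lemma discrete_subring_sqnorm_ge_1 z : Z z -> cdsqnorm n z <> 0 -> 1 <= cdsqnorm n z.
Proof.
  intros Hz Hz0.
  destruct (Rle_or_lt 1 (cdsqnorm n z)) as [Hge | Hlt]; [exact Hge | exfalso].
  pose proof (cdsqnorm_nonneg n z) as Hnn.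
  destruct HZ as (Z0 & _).
  destruct (Hdisc _ Z0) as (eps & Heps & Hiso).
  destruct (pow_lt_1_zero (cdsqnorm n z)) with (y := eps * eps) as [K HK];
    [rewrite Rabs_right; lra | nra |].
  specialize (HK K (Nat.le_refl K)).
  rewrite Rabs_right in HK by (apply Rle_ge, pow_le; lra).
  assert (Hpow0 : cdpow n z K = cd0 n).
  { apply Hiso; [apply subring_cdpow; exact Hz |].
    unfold cdnorm; rewrite cdsub_0_r, cdsqnorm_cdpow.
    rewrite <- (sqrt_square eps) by lra.
    apply sqrt_lt_1_alt; split; [apply pow_le; lra | exact HK]. }
  pose proof (cdsqnorm_cdpow z K) as E.
  rewrite Hpow0, cdsqnorm_cd0 in E.
  exact (pow_nonzero _ K Hz0 (eq_sym E)).
Qed.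

End DiscreteSubring.

Lemma backward_step_defined n (x x' a y u : CD n) r :
  cdsqnorm n x <> 0 -> cdsqnorm n x <= 1 -> cdadd n x' a = cdinv n x ->
  1 <= cdsqnorm n u -> r < 1 -> cdsqnorm n (cdsub n x' y) * cdsqnorm n u <= r ->
  cdsqnorm n (cdadd n y a) <> 0.
Proof.
  intros Hx0 Hx1 Hx' Hu Hr Herr E%cdsqnorm_eq_0.
  rewrite <- (cdsub_add_add_r n x' y a), Hx', E, cdsub_0_r, cdsqnorm_inv in Herr
    by exact Hx0.
  pose proof (cdsqnorm_nonneg n x).
  assert (1 <= / cdsqnorm n x) by (rewrite <- Rinv_1; apply Rinv_le_contravar; lra).
  nra.
Qed.

Lemma backward_step_error n (x x' a y u : CD n) : (n <= 3)%nat ->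
  cdsqnorm n x <> 0 -> cdadd n x' a = cdinv n x -> cdsqnorm n (cdadd n y a) <> 0 ->
  cdsqnorm n (cdsub n x (cdinv n (cdadd n y a))) * cdsqnorm n (cdmul n (cdadd n y a) u)
  = cdsqnorm n (cdsub n x' y) * cdsqnorm n u * cdsqnorm n x.
Proof.
  intros Hn Hx0 Hx' Hs.
  assert (Ht : cdsqnorm n (cdadd n x' a) = / cdsqnorm n x)
    by (rewrite Hx'; apply cdsqnorm_inv, Hx0).
  rewrite <- (cdinv_involutive n x) at 1 by exact Hx0; rewrite <- Hx'.
  rewrite cdsqnorm_sub_inv, cdsub_add_add_r, cdsqnorm_mul, Ht
    by (try rewrite Ht; auto using Rinv_neq_0_compat).
  field; auto.
Qed.

Definition denominator n (Z : CD n -> Prop) (y u : CD n) : Prop :=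
  Z u /\ Z (cdmul n y u) /\ cdsqnorm n u <> 0.

Lemma denominator_step n (Z : CD n -> Prop) (y u a : CD n) : (n <= 3)%nat ->
  is_subring n Z -> denominator n Z y u -> Z a -> cdsqnorm n (cdadd n y a) <> 0 ->
  denominator n Z (cdinv n (cdadd n y a)) (cdmul n (cdadd n y a) u).
Proof.
  intros Hn (_ & _ & Zadd & _ & Zmul) (Zu & Zyu & Hu0) Za Hs.
  repeat split.
  - rewrite cdmul_add_distr_r by exact Hn; auto.
  - rewrite cdmul_inv_mul_l by assumption; exact Zu.
  - rewrite cdsqnorm_mul by exact Hn.
    intros E%Rmult_integral; tauto.
Qed.

Fixpoint prod_range (f : nat -> R) (j k : nat) : R :=
  match k with O => 1 | S k' => f j * prod_range f (S j) k' end.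

Lemma prod_range_S_r f k j : prod_range f j (S k) = prod_range f j k * f (j + k)%nat.
Proof.
  revert j; induction k as [|k IH]; intro j.
  - simpl; rewrite Nat.add_0_r; ring.
  - change (f j * prod_range f (S j) (S k) = f j * prod_range f (S j) k * f (j + S k)%nat).
    rewrite IH, Nat.add_succ_comm; ring.
Qed.

Lemma prod_upto_range f m : prod_upto f m = prod_range f 0 m.
Proof.
  induction m as [|m IH]; [reflexivity |].
  rewrite prod_range_S_r; simpl; rewrite IH; reflexivity.
Qed.

Lemma orbit_S_inv n a (x0 : CD n) j x x' :
  orbit n a x0 j = Some x -> orbit n a x0 (S j) = Some x' ->
  cdsqnorm n x <> 0 /\ cdadd n x' (a (S j)) = cdinv n x.
Proof.
  intros Hj HSj; simpl in HSj; rewrite Hj in HSj; unfold Tmap in HSj.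
  destruct (Req_EM_T (cdnorm n x) 0) as [_ | Hx0]; [discriminate |].
  injection HSj as <-; split.
  - rewrite <- cdnorm_eq_0; exact Hx0.
  - apply cdsub_add.
Qed.

Lemma Tinvmap_nonzero n (a y : CD n) :
  cdsqnorm n (cdadd n y a) <> 0 -> Tinvmap n a y = Some (cdinv n (cdadd n y a)).
Proof.
  intro Hs; unfold Tinvmap.
  destruct (Req_EM_T (cdnorm n (cdadd n y a)) 0) as [E | _]; [| reflexivity].
  apply cdnorm_eq_0 in E; contradiction.
Qed.

Section BoundedOrbit.

Variable n : nat.
Hypothesis Hn : (n <= 3)%nat.
Variable Z : CD n -> Prop.
Hypothesis HZ : is_subring n Z.
Hypothesis Hdisc : discrete n Z.
Variable a : nat -> CD n.
Hypothesis Ha : forall m, (1 <= m)%nat -> Z (a m).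
Variable x0 : CD n.
Hypothesis Hx : forall m, exists x, orbit n a x0 m = Some x /\ cdnorm n x < 1.

Variables (m : nat) (xm : CD n).
Hypothesis Hxm : orbit n a x0 m = Some xm.

Lemma chain_denominator k j : (j + k = m)%nat ->
  exists y u, chain n a j k = Some y /\ denominator n Z y u /\
    cdnorm n u * prod_range (fun i => optnorm n (chain n a i (m - i))) j k = 1 /\
    forall x, orbit n a x0 j = Some x ->
      cdsqnorm n (cdsub n x y) * cdsqnorm n u <= cdsqnorm n xm.
Proof.
  assert (Hxm1 : cdsqnorm n xm < 1).
  { destruct (Hx m) as (x & Hm & Hlt); rewrite Hxm in Hm; injection Hm as <-.
    apply cdsqnorm_lt_1, Hlt. }
  revert j; induction k as [|k IH]; intros j Hjk.
  - rewrite Nat.add_0_r in Hjk; subst j.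
    destruct HZ as (Z0 & Z1 & _ & _ & Zmul).
    exists (cd0 n), (cd1 n); repeat split; auto.
    + rewrite cdsqnorm_cd1; lra.
    + unfold cdnorm; rewrite cdsqnorm_cd1, sqrt_1; simpl; ring.
    + intros x Hx'; rewrite Hxm in Hx'; injection Hx' as ->.
      rewrite cdsub_0_r, cdsqnorm_cd1; lra.
  - destruct (IH (S j) ltac:(lia)) as (y & u & Hch & Hden & Hprod & Herr).
    destruct (Hx j) as (xj & Hj & Hxj1%cdsqnorm_lt_1).
    destruct (Hx (S j)) as (xj' & HSj & _).
    destruct (orbit_S_inv _ _ _ _ _ _ Hj HSj) as [Hxj0 Hxj'].
    pose proof (Herr _ HSj) as Herr'.
    assert (Hu1 : 1 <= cdsqnorm n u).
    { destruct Hden as (Zu & _ & Hu0).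
      exact (discrete_subring_sqnorm_ge_1 n Hn Z HZ Hdisc u Zu Hu0). }
    set (s := cdadd n y (a (S j))).
    assert (Hs : cdsqnorm n s <> 0).
    { apply (backward_step_defined n xj xj' _ _ u (cdsqnorm n xm)); auto; lra. }
    assert (Hch' : chain n a j (S k) = Some (cdinv n s))
      by (simpl; rewrite Hch; apply Tinvmap_nonzero, Hs).
    exists (cdinv n s), (cdmul n s u).
    split; [exact Hch' |].
    split; [apply denominator_step; auto with arith |].
    split.
    + simpl; replace (m - j)%nat with (S k) by lia; rewrite Hch'; simpl.
      rewrite cdnorm_mul, cdnorm_inv by assumption.
      assert (cdnorm n s <> 0) by (rewrite cdnorm_eq_0; exact Hs).
      rewrite <- Hprod; field; assumption.
    + intros x Hx'; rewrite Hj in Hx'; injection Hx' as <-.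
      unfold s; rewrite (backward_step_error n xj xj') by assumption.
      pose proof (cdsqnorm_nonneg n xj).
      pose proof (cdsqnorm_nonneg n (cdsub n xj' y)).
      pose proof (cdsqnorm_nonneg n u).
      pose proof (cdsqnorm_nonneg n xm).
      nra.
Qed.

End BoundedOrbit.

Theorem lemma1p5 (n : nat) (Hn : (n <= 3)%nat) (Z : CD n -> Prop)
  (HZ : is_subring n Z) (Hconj : conj_closed n Z) (Hdisc : discrete n Z)
  (a : nat -> CD n) (Ha : forall m, (1 <= m)%nat -> Z (a m)) (x0 : CD n)
  (Hx : forall m, exists x, orbit n a x0 m = Some x /\ cdnorm n x < 1) :
  (forall m i, (i < m)%nat -> chain n a i (m - i) <> None) /\
  exists C, forall m, prod_upto (fun i => optnorm n (chain n a i (m - i))) m <= C.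
Proof.
  split.
  - intros m i Him; destruct (Hx m) as (xm & Hxm & _).
    destruct (chain_denominator n Hn Z HZ Hdisc a Ha x0 Hx m xm Hxm (m - i) i)
      as (y & _ & Hch & _); [lia |].
    rewrite Hch; discriminate.
  - exists 1; intro m; destruct (Hx m) as (xm & Hxm & _).
    destruct (chain_denominator n Hn Z HZ Hdisc a Ha x0 Hx m xm Hxm m 0)
      as (y & u & _ & (Zu & _ & Hu0) & Hprod & _); [lia |].
    pose proof (cdnorm_ge_1 n u (discrete_subring_sqnorm_ge_1 n Hn Z HZ Hdisc u Zu Hu0)).
    rewrite prod_upto_range; nra.
Qed.
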